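(* Let ${\rm K}/\mathbb{Q}$ be a finite Galois extension of degree $m$ and let $u\in E_{\rm K}\cap\mathbb{S}$. Then there exist an integer $k\ge1$ and a constant $c>0$ (depending on $u$, $k$ and $m$) such that $|{\rm N}(\Phi_n(u^k))|\ge \exp(cn)$ for every positive integer $n$ with $\varphi(n)\ge \frac12 n$.
   Context: $E_{\rm K}$ is the unit group of $\mathcal{O}_{\rm K}$; ${\rm N}$ is the norm from ${\rm K}$ to $\mathbb{Q}$; $\Phi_n$ is the $n$-th cyclotomic polynomial and $\varphi$ Euler's totient function. $\mathbb{S}$ is the set of algebraic integers none of whose conjugates lies on the complex unit circle. *)

From HB Require Import structures.
From mathcomp Require Import all_boot all_order all_algebra all_field.
From mathcomp Require Import Rstruct.
From Stdlib Require Import Reals.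
Set Implicit Arguments. Unset Strict Implicit. Unset Printing Implicit Defensive.
Import GRing.Theory Num.Theory.
Local Open Scope ring_scope.

Definition is_alg_int (L : fieldExtType rat) (x : L) : Prop :=
  exists p : {poly int}, p \is monic /\ root (map_poly (fun z : int => z%:~R : L) p) x.

Definition is_unit_OK (L : fieldExtType rat) (x : L) : Prop :=
  x != 0 /\ is_alg_int x /\ is_alg_int x^-1.

(* x is in S: an algebraic integer none of whose conjugates (images under
   the embeddings K -> C, here into the algebraic complex numbers algC)
   lies on the unit circle *)
Definition in_S (L : fieldExtType rat) (x : L) : Prop :=
  is_alg_int x /\ forall f : {rmorphism L -> algC}, `|f x| != 1.

(* absolute norm N_{K/Q}(x) = prod_{sigma in Gal(K/Q)} sigma(x), an element of
   the prime subfield 1%VS = Q; normQ x is the rational r with N(x) = r%:A *)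
Definition normQ (L : splittingFieldType rat) (x : L) : rat :=
  coord [tuple 1] ord0 (galNorm 1%VS fullv x).

Definition Phi_at (L : fieldExtType rat) (n : nat) (x : L) : L :=
  (map_poly (fun z : int => z%:~R : L) 'Phi_n).[x].

(* Fix an embedding f of K into the complex numbers and put a_s = |f(s u)| for
   s in Gal(K/Q).  As u is a nonzero algebraic integer, the product of the a_s
   is |N(u)| >= 1, and no a_s equals 1, so some a_s exceeds 1.  The estimate
   |a^(j+1) - 1| >= |a - 1| max(a,1)^j then yields a k with
   prod_s |a_s^k - 1| >= 2.  All roots of Phi_n lie on the unit circle, whence
   |Phi_n(v)| >= ||v| - 1|^phi(n), and so
   |N(Phi_n(u^k))| = prod_s |Phi_n(f(s u)^k)| >= 2^phi(n) >= exp((ln 2 / 2) n). *)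

From HB Require Import structures.
From mathcomp Require Import all_boot all_order all_algebra all_field fingroup.
From mathcomp Require Import Rstruct.
From Stdlib Require Import Reals Lra.
Import Order.TTheory GRing.Theory Num.Theory.
Set Implicit Arguments. Unset Strict Implicit. Unset Printing Implicit Defensive.
Local Open Scope ring_scope.

Lemma bernoulli_ineq (R : numDomainType) (e : R) (j : nat) :
  0 <= e -> 1 + e *+ j <= (1 + e) ^+ j.
Proof.
move=> e_ge0; elim: j => [|j IHj]; first by rewrite mulr0n addr0 expr0.
rewrite exprSr mulrSr addrA (le_trans _ (ler_wpM2r _ IHj)) ?addr_ge0 //.
by rewrite mulrDr mulr1 lerD2l ler_peMl // lerDl mulrn_wge0.
Qed.

Lemma exists_ge_mul_expr (R : archiNumFieldType) (t H C : R) :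
  0 <= C -> 0 < t -> 1 < H -> exists j, C <= t * H ^+ j.
Proof.
move=> C_ge0 t_gt0 H_gt1; have e_gt0 : 0 < H - 1 by rewrite subr_gt0.
pose j := Num.Def.archi_bound (C / (t * (H - 1))).
have /ltW Hj : C / (t * (H - 1)) < j%:R.
  by apply: archi_boundP; rewrite divr_ge0 // ltW // mulr_gt0.
exists j; rewrite ler_pdivrMr ?mulr_gt0 // mulrCA mulr_natl in Hj.
apply: (le_trans Hj); rewrite ler_pM2l //.
have := bernoulli_ineq j (ltW e_gt0); rewrite subrKC; apply: le_trans.
by rewrite lerDr.
Qed.

Lemma dist1_expS_ge (R : numDomainType) (a : R) (j : nat) : 0 <= a ->
  `|a - 1| * Num.max a 1 ^+ j <= `|a ^+ j.+1 - 1|.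
Proof.
move=> a_ge0; rewrite maxElt; case: (real_ltP (ger0_real a_ge0) (@real1 R)).
  move=> /ltW a_le1; rewrite expr1n mulr1 distrC ger0_norm ?subr_ge0 ?exprn_ile1 //.
  by rewrite lerD2l lerN2 exprS ler_piMr ?exprn_ge0 ?exprn_ile1.
move=> a_ge1; rewrite ger0_norm ?subr_ge0 ?exprn_ege1 //.
by rewrite mulrBl mul1r -exprS lerD2l lerN2 exprn_ege1.
Qed.

Lemma exists_gt1_of_prodr_ge1 (R : numDomainType) (I : finType) (A : {pred I})
    (F : I -> R) (i0 : I) :
  i0 \in A -> (forall i, 0 <= F i) -> {in A, forall i, F i != 1} ->
  1 <= \prod_(i in A) F i -> exists2 i, i \in A & 1 < F i.
Proof.
move=> Ai0 F_ge0 F_neq1 prod_ge1.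
have [/exists_inP[i Ai F_gt1]|] := boolP [exists i in A, 1 < F i]; first by exists i.
rewrite negb_exists_in => /forall_inP F_ngt1.
have F_lt1 i : i \in A -> F i < 1.
  move=> Ai; rewrite lt_neqAle F_neq1 //=.
  by rewrite real_leNgt ?ger0_real ?F_ngt1.
suff : \prod_(i in A) F i < \prod_(i in A) 1.
  by rewrite big1_eq => /lt_geF; rewrite prod_ge1.
apply: ltr_prod; first by apply/hasP; exists i0; rewrite ?mem_index_enum.
by move=> i Ai; rewrite F_ge0 F_lt1.
Qed.

Lemma prod_dist1_expS_unbounded (R : archiNumFieldType) (I : finType) (A : {pred I})
    (a : I -> R) (C : R) :
  0 <= C -> (forall i, 0 <= a i) -> {in A, forall i, a i != 1} ->
  (exists2 i, i \in A & 1 < a i) ->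
  exists j, C <= \prod_(i in A) `|a i ^+ j.+1 - 1|.
Proof.
move=> C_ge0 a_ge0 a_neq1 [i0 Ai0 a_gt1].
have t_gt0 : 0 < \prod_(i in A) `|a i - 1|.
  by apply: prodr_gt0 => i Ai; rewrite normr_gt0 subr_eq0 a_neq1.
have max_ge1 i : 1 <= Num.max (a i) 1.
  by rewrite maxElt; case: ifPn; rewrite // real_leNgt ?ger0_real.
have H_gt1 : 1 < \prod_(i in A) Num.max (a i) 1.
  rewrite (bigD1 i0) //= {1}maxElt (lt_gtF a_gt1) (lt_le_trans a_gt1) //.
  rewrite ler_peMr ?a_ge0 //.
  by apply: (big_ind (fun x => 1 <= x)) => // x y; apply: mulr_ege1.
have [j le_C] := exists_ge_mul_expr C_ge0 t_gt0 H_gt1.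
exists j; apply: (le_trans le_C); rewrite -prodrXl -big_split /=.
apply: ler_prod => i _; rewrite dist1_expS_ge // mulr_ge0 //.
by rewrite exprn_ge0 // (le_trans ler01).
Qed.

Lemma norm_Phi_horner_ge (n : nat) (v : algC) : (0 < n)%nat ->
  `| `|v| - 1 | ^+ totient n <= `|(map_poly (intr : int -> algC) 'Phi_n).[v]|.
Proof.
move=> n_gt0; have [z prim_z] := C_prim_root_exists n_gt0.
have z_norm : `|z| = 1.
  apply/eqP; rewrite -(pexpr_eq1 (prim_order_gt0 prim_z)) ?normr_ge0 //.
  by rewrite -normrX prim_expr_order // normr1.
have card_coprime : #|[pred k : 'I_n | coprime k n]| = totient n.
  rewrite totient_count_coprime big_mkord -sum1_card big_mkcond /=.
  by apply: eq_bigr => k _; rewrite inE coprime_sym; case: coprime.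
rewrite (Cintr_Cyclotomic prim_z) horner_prod normr_prod -card_coprime.
rewrite -prodr_const; apply: ler_prod => k _; rewrite normr_ge0 hornerXsubC /=.
by rewrite -(expr1n _ k) -z_norm -normrX ler_dist_dist.
Qed.

Section RatExtension.

Variable L : fieldExtType rat.

Lemma coord1K (c : L) : c \in 1%VS -> (coord [tuple 1] ord0 c)%:A = c.
Proof.
move=> c1; have c_span : c \in span [tuple (1 : L)] by rewrite span_seq1.
by rewrite {2}(coord_span c_span) big_ord1.
Qed.

Lemma map_coord1K (p : {poly L}) : p \is a polyOver 1%VS ->
  map_poly (in_alg L) (map_poly (coord [tuple 1] ord0) p) = p.
Proof.
move=> p_Q; apply/polyP => i; rewrite coef_map /= coef_map_id0 ?linear0 //.
exact/coord1K/(polyOverP p_Q).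
Qed.

Lemma exists_primitive_element : exists z : L, <<1; z>>%VS = fullv.
Proof.
have sep : separable 1 {:L}.
  apply/separableP => y _; apply: pcharf0_separable => p.
  by rewrite pchar_lalg pchar_num.
by exists (separable_generator 1 fullv); rewrite -eq_adjoin_separable_generator ?subvf.
Qed.

Lemma algC_embedding_exists : inhabited {rmorphism L -> algC}.
Proof.
(* L = Q(z); x = (Q x).[z] is sent to (Q x).[w] for a complex root w of the
   minimal polynomial P of z, which is multiplicative since Q (x * y) is
   congruent to Q x * Q y modulo P. *)
have [z gen_z] := exists_primitive_element.
pose Q x := map_poly (coord [tuple 1] ord0) (Fadjoin_poly 1 z x).
pose P := map_poly (coord [tuple (1 : L)] ord0) (minPoly 1 z).
have QE x : map_poly (in_alg L) (Q x) = Fadjoin_poly 1 z x.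
  exact/map_coord1K/Fadjoin_polyOver.
have PE : map_poly (in_alg L) P = minPoly 1 z by exact/map_coord1K/minPolyOver.
have /closed_rootP[w Pw] : size (map_poly (ratr : rat -> algC) P) != 1.
  by rewrite size_map_poly -(size_map_poly (in_alg L)) PE size_minPoly.
pose phi x := (map_poly ratr (Q x)).[w].
have QM x y : Q (x * y) = (Q x * Q y) %% P.
  apply: (map_poly_inj (in_alg L)).
  rewrite map_modp rmorphM /= !QE PE -Fadjoin_poly_mod ?rpredM ?Fadjoin_polyOver //.
  by rewrite hornerM !Fadjoin_poly_eq // gen_z memvf.
have phi_add : zmod_morphism phi.
  by move=> x y; rewrite /phi /Q !raddfB /= hornerD hornerN.
have phi_mul : monoid_morphism phi.
  split=> [|x y].
    rewrite /phi /Q Fadjoin_polyC ?mem1v // !map_polyC hornerC /=.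
    rewrite (coord_free (X := [tuple (1 : L)]) ord0 ord0) ?rmorph1 //.
    by rewrite seq1_free oner_neq0.
  rewrite /phi -hornerM -rmorphM QM {2}(divp_eq (Q x * Q y) P) rmorphD rmorphM /=.
  by rewrite hornerD hornerM (rootP Pw) mulr0 add0r.
pose phi_zmod := GRing.isZmodMorphism.Build _ _ phi phi_add.
pose phi_monoid := GRing.isMonoidMorphism.Build _ _ phi phi_mul.
by constructor; exact: (HB.pack phi phi_zmod phi_monoid).
Qed.

End RatExtension.

Lemma Phi_at_rmorph (L : fieldExtType rat) (R : nzRingType) (g : {rmorphism L -> R})
    (n : nat) (x : L) :
  g (Phi_at n x) = (map_poly intr 'Phi_n).[g x].
Proof.
rewrite /Phi_at -horner_map -map_poly_comp; congr _.[_].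
by apply: eq_map_poly => c /=; rewrite rmorph_int.
Qed.

Lemma alg_int_rmorph_Aint (L : fieldExtType rat) (g : {rmorphism L -> algC}) (x : L) :
  is_alg_int x -> g x \in Aint.
Proof.
case=> p [p_monic px]; apply: (@root_monic_Aint (map_poly intr p)).
- rewrite -(eq_map_poly (rmorph_int g)) map_poly_comp; exact: rmorph_root.
- exact: monic_map.
- by apply/polyOverP => i; rewrite coef_map /= intr_int.
Qed.

Section GaloisNorm.

Variables (L : splittingFieldType rat) (galL : galois 1 {:L}).

Lemma normQ_rmorph (f : {rmorphism L -> algC}) (x : L) :
  ratr (normQ x) = \prod_(s in 'Gal({:L} / 1)%g) f (s x).
Proof.
have normQ_Q : galNorm 1 {:L} x \in 1%VS.
  by have := galNorm_fixedField 1%AS (memvf x); rewrite (galois_fixedField galL).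
by rewrite /normQ -(fmorph_rat f) -alg_num_field coord1K // rmorph_prod.
Qed.

Lemma normQ_alg_int_ge1 (x : L) : x != 0 -> is_alg_int x -> 1 <= `|normQ x|.
Proof.
move=> x_neq0 x_int; have [f] := algC_embedding_exists L.
rewrite -(ler_rat algC) ratr_norm rmorph1 (normQ_rmorph f).
apply: norm_intr_ge1; last by apply/prodf_neq0 => s _; rewrite !fmorph_eq0.
apply: Cint_rat_Aint; first by rewrite -(normQ_rmorph f) Crat_rat.
by apply: rpred_prod => s _; apply: (alg_int_rmorph_Aint (f \o s)).
Qed.

End GaloisNorm.

Lemma exists_expn_normQ_Phi_ge (L : splittingFieldType rat) (u : L) :
  galois 1 {:L} -> u != 0 -> in_S u ->
  exists k, (1 <= k)%nat /\
    forall n, (0 < n)%nat -> 2%:R ^+ totient n <= `|normQ (Phi_at n (u ^+ k))|.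
Proof.
move=> galL u_neq0 [u_int u_conj]; have [f] := algC_embedding_exists L.
pose a (s : gal_of {:L}) := `|f (s u)|.
have a_ge0 s : 0 <= a s by apply: normr_ge0.
have a_neq1 s : a s != 1 by have := u_conj (f \o s).
have prod_a_ge1 : 1 <= \prod_(s in 'Gal({:L} / 1)%g) a s.
  rewrite -normr_prod -(normQ_rmorph galL) -ratr_norm -(rmorph1 ratr) ler_rat.
  exact: normQ_alg_int_ge1.
have a_gt1 := exists_gt1_of_prodr_ge1 (group1 _) a_ge0 (in1W a_neq1) prod_a_ge1.
have [j le2] := prod_dist1_expS_unbounded (ler0n _ 2) a_ge0 (in1W a_neq1) a_gt1.
exists j.+1; split=> // n n_gt0.
rewrite -(ler_rat algC) ratr_norm rmorphXn rmorph_nat (normQ_rmorph galL f) normr_prod.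
apply: le_trans (lerXn2r _ _ _ le2) _; rewrite ?nnegrE ?ler0n ?(le_trans _ le2) //.
rewrite -prodrXl; apply: ler_prod => s _; rewrite exprn_ge0 //=.
have -> : f (s (Phi_at n (u ^+ j.+1))) = (map_poly intr 'Phi_n).[f (s u) ^+ j.+1].
  by have := Phi_at_rmorph (f \o s) n (u ^+ j.+1); rewrite rmorphXn.
by rewrite (le_trans _ (norm_Phi_horner_ge _ n_gt0)) // normrX.
Qed.

Lemma pow2_le_Rabs_ratr (r : rat) (p : nat) :
  2%:R ^+ p <= `|r| -> (2 ^ p <= Rabs (ratr r))%R.
Proof.
move=> le_r; apply/RleP; have -> : Rabs (ratr r) = `|ratr r| by [].
have -> : 2%R = 2%:R by rewrite -INRE INR_IZR_INZ.
by rewrite RpowE -ratr_norm -(rmorph_nat ratr) -rmorphXn ler_rat.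
Qed.

Lemma exp_le_pow2 (n p : nat) : (n <= 2 * p)%nat -> (exp (ln 2 / 2 * INR n) <= 2 ^ p)%R.
Proof.
move=> /ssrnat.leP/le_INR; rewrite mult_INR => le_np.
rewrite -Rpower_pow; last by lra.
have -> : (ln 2 / 2 * INR n = INR n / 2 * ln 2)%R by field.
by apply: Rle_Rpower; move: le_np => /=; lra.
Qed.

Local Close Scope ring_scope.

Theorem lemma2p1 (L : splittingFieldType rat) (m : nat)
  (HGal : galois 1%VS (fullv : {vspace L})) (Hm : \dim (fullv : {vspace L}) = m)
  (u : L) (Hu : is_unit_OK u) (HS : in_S u) :
  exists k : nat, (1 <= k)%N /\
    exists c : R, Rlt 0%R c /\
      forall n : nat, (0 < n)%N -> (n <= 2 * totient n)%N ->
        Rle (exp (Rmult c (INR n))) (Rabs (ratr (normQ (Phi_at n (GRing.exp u k))))).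
Proof.
have [k [k_ge1 normQ_ge]] := exists_expn_normQ_Phi_ge HGal Hu.1 HS.
exists k; split => //; exists (ln 2 / 2)%R; split; first by have := ln_lt_2; lra.
move=> n n_gt0 le_n_totient; apply: Rle_trans (exp_le_pow2 le_n_totient) _.
exact: pow2_le_Rabs_ratr (normQ_ge n n_gt0).
Qed.
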